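(* Let $\mathcal G=(V,E,r)$ be a graph. (1) The monoid $\mathbf A(\mathcal G)$ is half-factorial if and only if $\mathcal G$ is acyclic. (2) The monoid $\mathbf A(\mathcal G)$ is factorial if and only if every connected component of $\mathcal G$ contains at most one edge.
   Context: A graph $\mathcal G=(V,E,r)$ consists of a finite vertex set $V$, a finite edge set $E$ disjoint from $V$, and a map $r$ assigning to each edge a two-element subset of $V$; multiple edges allowed, no loops. Acyclic means containing no cycle, where two edges with the same pair of endpoints form a cycle of length $2$. An agglomeration on $\mathcal G$ is a function $a\colon V\cup E\to\mathbb N_0$ with $a(v)\ge a(e)$ whenever $v$ is incident with $e$; $\mathbf A(\mathcal G)$ is the monoid of agglomerations under pointwise addition. A reduced atomic monoid is half-factorial if any two factorizations of an element into atoms have the same number of atoms, and factorial if every element factors uniquely into atoms up to order. *)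

From mathcomp Require Import all_boot.
Set Implicit Arguments. Unset Strict Implicit. Unset Printing Implicit Defensive.

(* A graph G = (V, E, r): finite vertex type V, finite edge type E (disjoint
   by construction), r assigns to each edge a two-element subset of V. *)
Definition is_graph (V E : finType) (r : E -> {set V}) : Prop :=
  forall e : E, #|r e| = 2.

Section Graphs.
Variables (V E : finType) (r : E -> {set V}).

(* A cycle of length k >= 2: distinct vertices v_0..v_{k-1}, distinct edges
   e_0..e_{k-1}, with r e_i = {v_i, v_{i+1 mod k}}.  For k = 2 this is a pair
   of parallel edges. *)
Definition has_cycle : Prop :=
  exists (k : nat) (vs : 'I_k -> V) (es : 'I_k -> E),
    [/\ 2 <= k, injective vs, injective es &
        forall i : 'I_k, r (es i) = [set vs i; vs (ordS i)]].

Definition acyclic : Prop := ~ has_cycle.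

Definition adj : rel V := fun u v => [exists e, r e == [set u; v]] && (u != v).

Definition components_at_most_one_edge : Prop :=
  forall (e1 e2 : E) (u1 u2 : V),
    u1 \in r e1 -> u2 \in r e2 -> connect adj u1 u2 -> e1 = e2.

Definition is_agg (a : {ffun V + E -> nat}) : Prop :=
  forall (e : E) (v : V), v \in r e -> a (inr e) <= a (inl v).

Definition agg_zero : {ffun V + E -> nat} := [ffun _ => 0].
Definition agg_add (a b : {ffun V + E -> nat}) : {ffun V + E -> nat} :=
  [ffun x => a x + b x].
Definition agg_sum (s : seq {ffun V + E -> nat}) : {ffun V + E -> nat} :=
  foldr agg_add agg_zero s.

Definition agg_atom (a : {ffun V + E -> nat}) : Prop :=
  [/\ is_agg a, a <> agg_zero &
      forall b c, is_agg b -> is_agg c -> a = agg_add b c ->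
                  b = agg_zero \/ c = agg_zero].

Definition agg_factorization (a : {ffun V + E -> nat})
    (s : seq {ffun V + E -> nat}) : Prop :=
  (forall x, x \in s -> agg_atom x) /\ agg_sum s = a.

Definition agg_half_factorial : Prop :=
  forall a s t, is_agg a -> agg_factorization a s -> agg_factorization a t ->
    size s = size t.

Definition agg_factorial : Prop :=
  forall a, is_agg a ->
    (exists s, agg_factorization a s) /\
    (forall s t, agg_factorization a s -> agg_factorization a t -> perm_eq s t).

End Graphs.

(* An atom of A(G) takes only the values 0 and 1, so it is the indicator [W, F] of a
   subgraph: a set W of vertices and a set F of edges with both ends in W.  Such an
   indicator is an atom as soon as the subgraph is connected, and splitting it along a
   labelling of the vertices that is constant on the edges of F shows #|W| <= #|F| + 1
   for every atom.  In a forest #|F| < #|W|, so every atom has vertex sum one more than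
   its edge sum, and every factorization of a has exactly sum_v a(v) - sum_e a(e) atoms.
   A cycle with vertices v_i and edges e_i (i < k) gives a relation between k and k + 1
   atoms: sum_i [e_i] = [cycle] + sum_i [v_i].  If no two edges meet, the only atoms are
   the indicators of single vertices and single edges, and the multiplicities of a
   factorization can be read off from a; two edges f1, f2 of a forest meeting in v give
   two factorizations [f1] + [f2] = [f1 and f2] + [v]. *)

From mathcomp Require Import all_boot zify.
From Stdlib Require Import Classical.
Set Implicit Arguments. Unset Strict Implicit. Unset Printing Implicit Defensive.

Lemma sum_cond_eqb (T : finType) (P : pred T) (t : T) :
  \sum_(u | P u) (t == u : nat) = P t.
Proof.
rewrite big_mkcond (bigD1 t) //= eqxx big1 ?addn0; first by case: (P t).
by move=> u /negbTE ut; rewrite eq_sym ut; case: (P u).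
Qed.

Lemma sum_seq_eqb (T : eqType) (s : seq T) (t : T) :
  \sum_(u <- s) (u == t : nat) = count_mem t s.
Proof. by rewrite -sum1_count [RHS]big_mkcond. Qed.

Lemma sum_inj_eqb (T U : finType) (g : T -> U) (u : U) : injective g ->
  \sum_t (g t == u : nat) = (u \in [set g t | t : T]).
Proof.
move=> g_inj; case: imsetP => [[t _ ->]|u_notin].
  rewrite (bigD1 t) //= eqxx big1 // => t' t't.
  by rewrite (inj_eq g_inj) (negbTE t't).
by rewrite big1 // => t _; case: eqP => // gt; case: u_notin; exists t.
Qed.

Lemma ordS_neq k (i : 'I_k) : 1 < k -> ordS i != i.
Proof.
move=> k_gt1; apply/eqP => /(congr1 val) /=; have := ltn_ord i.
rewrite leq_eqVlt => /predU1P[ik | lt_ik]; first by rewrite ik modnn; lia.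
by rewrite modn_small //; lia.
Qed.

Lemma uniq_nth_set2_inj (T : finType) (x0 : T) (s : seq T) i j :
  uniq s -> i < (size s).-1 -> j < (size s).-1 ->
  [set nth x0 s i; nth x0 s i.+1] = [set nth x0 s j; nth x0 s j.+1] -> i = j.
Proof.
move=> us hi hj /setP eq_ij.
have nth_eq a b : a < size s -> b < size s -> (nth x0 s a == nth x0 s b) = (a == b).
  by move=> ha hb; rewrite nth_uniq.
have := eq_ij (nth x0 s i); have := eq_ij (nth x0 s i.+1).
by rewrite !inE !nth_eq ?eqxx ?orbT; lia.
Qed.

Section Agglomerations.
Variables (V E : finType) (r : E -> {set V}).
Local Notation agg := {ffun V + E -> nat}.
Local Notation agg0 := (agg_zero V E).

Lemma agg_sumE (s : seq agg) z : agg_sum s z = \sum_(y <- s) y z.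
Proof.
elim: s => [|y s IHs]; first by rewrite big_nil ffunE.
by rewrite big_cons ffunE -IHs.
Qed.

Lemma agg_sum2 (a b : agg) : agg_sum [:: a; b] = agg_add a b.
Proof. by apply/ffunP => z; rewrite !ffunE addn0. Qed.

Lemma agg_sum_cat (s t : seq agg) :
  agg_sum (s ++ t) = agg_add (agg_sum s) (agg_sum t).
Proof. by apply/ffunP => z; rewrite ffunE !agg_sumE big_cat. Qed.

Lemma is_agg0 : is_agg r agg0.
Proof. by move=> e v _; rewrite !ffunE. Qed.

Lemma is_agg_add a b : is_agg r a -> is_agg r b -> is_agg r (agg_add a b).
Proof. by move=> ha hb e v hv; rewrite !ffunE leq_add ?ha ?hb. Qed.

Lemma is_agg_sum (s : seq agg) : {in s, forall a, is_agg r a} -> is_agg r (agg_sum s).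
Proof.
elim: s => [_|a s IHs hs]; first exact: is_agg0.
apply: is_agg_add; first exact/hs/mem_head.
by apply: IHs => b hb; apply/hs; rewrite inE hb orbT.
Qed.

Lemma agg_neq0 (a : agg) : a <> agg0 -> exists z, 0 < a z.
Proof.
case: (pickP [pred z | 0 < a z]) => [z hz _|hnone]; first by exists z.
by case; apply/ffunP => z; rewrite ffunE; apply/eqP; rewrite -leqn0 leqNgt [_ < _]hnone.
Qed.

Definition agg_weight (a : agg) := \sum_z a z.

Lemma agg_weight_add a b : agg_weight (agg_add a b) = agg_weight a + agg_weight b.
Proof. by rewrite /agg_weight -big_split; apply: eq_bigr => z _; rewrite ffunE. Qed.

Lemma agg_weight_gt0 a : a <> agg0 -> 0 < agg_weight a.
Proof. by case/agg_neq0 => z hz; rewrite /agg_weight (bigD1 z) // ltn_addr. Qed.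

Lemma factorization_exists a : is_agg r a -> exists s, agg_factorization r a s.
Proof.
have [n] := ubnP (agg_weight a); elim: n a => // n IHn a ltan ha.
have [->|a_neq0] := classic (a = agg0); first by exists [::].
have [[b [c [hb hc habc b_neq0 c_neq0]]]|atom_a] := classic
  (exists b c, [/\ is_agg r b, is_agg r c, a = agg_add b c, b <> agg0 & c <> agg0]).
  have wa : agg_weight a = agg_weight b + agg_weight c by rewrite habc agg_weight_add.
  have := agg_weight_gt0 b_neq0; have := agg_weight_gt0 c_neq0 => wb wc.
  have [lt_bn lt_cn] : agg_weight b < n /\ agg_weight c < n by lia.
  have [s [hs sb]] := IHn b lt_bn hb.
  have [t [ht tc]] := IHn c lt_cn hc.
  exists (s ++ t); split; last by rewrite agg_sum_cat sb tc.
  by move=> x; rewrite mem_cat => /orP[/hs|/ht].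
exists [:: a]; split; last by apply/ffunP => z; rewrite !ffunE addn0.
move=> x; rewrite inE => /eqP ->; split=> // b c hb hc habc.
apply: NNPP => /not_or_and[b_neq0 c_neq0].
by apply: atom_a; exists b, c.
Qed.

(** * Atoms as connected subgraphs *)

Lemma atom_le1 x : agg_atom r x -> forall z, x z <= 1.
Proof.
case=> hx _ atom_x z; rewrite leqNgt; apply/negP => x_gt1.
pose b : agg := [ffun z => minn (x z) 1].
pose c : agg := [ffun z => x z - 1].
have hb : is_agg r b by move=> e v hv; rewrite !ffunE; have := hx _ _ hv; lia.
have hc : is_agg r c by move=> e v hv; rewrite !ffunE leq_sub2r ?hx.
have hbc : x = agg_add b c by apply/ffunP => y; rewrite !ffunE /=; lia.
by case: (atom_x _ _ hb hc hbc) => /ffunP/(_ z); rewrite !ffunE /=; lia.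
Qed.

Definition is_subgraph (W : {set V}) (F : {set E}) : Prop :=
  forall e, e \in F -> r e \subset W.

Lemma is_subgraph0 W : is_subgraph W set0.
Proof. by move=> e; rewrite inE. Qed.

Definition in_subgraph (W : {set V}) (F : {set E}) (z : V + E) : bool :=
  match z with inl v => v \in W | inr e => e \in F end.

Definition subgraph_agg W F : agg := [ffun z => in_subgraph W F z : nat].

Lemma is_agg_subgraphP W F : is_agg r (subgraph_agg W F) <-> is_subgraph W F.
Proof.
split=> hWF e.
  move=> he; apply/subsetP => v hv; have := hWF e v hv.
  by rewrite !ffunE /= he; case: (v \in W).
move=> v hv; rewrite !ffunE /=.
by case he: (e \in F); rewrite //= (subsetP (hWF e he)).
Qed.

Lemma subgraph_agg_inj W F W' F' :
  subgraph_agg W F = subgraph_agg W' F' -> W = W' /\ F = F'.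
Proof.
move/ffunP => h; split; apply/setP => x.
  by have := h (inl x); rewrite !ffunE /=; do 2 case: (x \in _).
by have := h (inr x); rewrite !ffunE /=; do 2 case: (x \in _).
Qed.

Lemma subgraph_agg0 : subgraph_agg set0 set0 = agg0.
Proof. by apply/ffunP => -[v|e]; rewrite !ffunE /= inE. Qed.

Lemma atom_subgraph_agg x : agg_atom r x -> exists W F, x = subgraph_agg W F.
Proof.
move/atom_le1 => x_le1; exists [set v | x (inl v) == 1], [set e | x (inr e) == 1].
apply/ffunP => z; rewrite ffunE.
by case: z (x_le1 z) => ? /=; rewrite inE; case: (x _) => [|[]].
Qed.

Lemma atom_is_subgraph W F : agg_atom r (subgraph_agg W F) -> is_subgraph W F.
Proof. by case=> /is_agg_subgraphP. Qed.

Lemma subgraph_agg_split W F A B :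
  subgraph_agg W F =
  agg_add (subgraph_agg (W :&: A) (F :&: B)) (subgraph_agg (W :\: A) (F :\: B)).
Proof.
by apply/ffunP => -[v|e]; rewrite !ffunE /= !inE;
  [case: (v \in A); case: (v \in W) | case: (e \in B); case: (e \in F)].
Qed.

Lemma atom_subgraph_split W F A B : agg_atom r (subgraph_agg W F) ->
  is_subgraph (W :&: A) (F :&: B) -> is_subgraph (W :\: A) (F :\: B) ->
  (W :&: A = set0 /\ F :&: B = set0) \/ (W :\: A = set0 /\ F :\: B = set0).
Proof.
case=> _ _ atom_WF /is_agg_subgraphP h1 /is_agg_subgraphP h2.
by case: (atom_WF _ _ h1 h2 (subgraph_agg_split W F A B));
  rewrite -subgraph_agg0 => /subgraph_agg_inj[-> ->]; [left|right].
Qed.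

Definition incident (F : {set E}) : rel (V + E) := fun z1 z2 =>
  match z1, z2 with
  | inl v, inr e | inr e, inl v => (e \in F) && (v \in r e)
  | _, _ => false
  end.

Lemma connected_subgraph_atom W F z0 : is_subgraph W F -> in_subgraph W F z0 ->
  (forall z, in_subgraph W F z -> connect (incident F) z0 z) ->
  agg_atom r (subgraph_agg W F).
Proof.
move=> hWF hz0 hconn; split; first exact/is_agg_subgraphP.
  by move=> /ffunP/(_ z0); rewrite !ffunE hz0.
move=> b c hb hc hbc.
have bc z : b z + c z = in_subgraph W F z.
  by move/ffunP/(_ z): hbc; rewrite !ffunE.
have flat e v : e \in F -> v \in r e -> b (inl v) = b (inr e) /\ c (inl v) = c (inr e).
  move=> he hv; have := bc (inl v); have := bc (inr e).
  rewrite /= he (subsetP (hWF e he) v hv); have := hb e v hv; have := hc e v hv; lia.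
have closed_bc : closed (incident F) [pred z | (b z == b z0) && (c z == c z0)].
  by move=> [v|e] [w|f] //= /andP[he hv]; rewrite !inE; case: (flat _ _ he hv) => -> ->.
have const z : in_subgraph W F z -> b z = b z0 /\ c z = c z0.
  move/hconn/(closed_connect closed_bc); rewrite !inE !eqxx /=.
  by case/esym/andP => /eqP -> /eqP ->.
have := bc z0; rewrite hz0 /= => bc_z0.
have [b_z0|b_z0] := posnP (b z0); [left|right]; apply/ffunP => z; rewrite ffunE;
  have := bc z; case: (boolP (in_subgraph W F z)) => [/const|] /=; lia.
Qed.

Definition vertex_agg v : agg := subgraph_agg [set v] set0.

Definition edge_agg e : agg := subgraph_agg (r e) [set e].

Lemma vertex_agg_atom v : agg_atom r (vertex_agg v).
Proof.
apply: (@connected_subgraph_atom _ _ (inl v) (is_subgraph0 _)); rewrite /= ?inE //.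
by move=> [w|e] /=; rewrite inE // => /eqP ->.
Qed.

Lemma edge_agg_atom e : agg_atom r (edge_agg e).
Proof.
apply: (@connected_subgraph_atom _ _ (inr e)); rewrite /= ?inE //.
  by move=> f; rewrite inE => /eqP ->.
move=> [w|f] /=; last by rewrite inE => /eqP ->.
by move=> hw; apply: connect1; rewrite /= inE eqxx.
Qed.

Lemma vertex_agg_inj : injective vertex_agg.
Proof. by move=> v w /subgraph_agg_inj[/set1_inj]. Qed.

Lemma edge_agg_inj : injective edge_agg.
Proof. by move=> e f /subgraph_agg_inj[_ /set1_inj]. Qed.

Lemma vertex_agg_neq_edge_agg v e : vertex_agg v != edge_agg e.
Proof. by apply/eqP => /subgraph_agg_inj[_ /setP/(_ e)]; rewrite !inE eqxx. Qed.

Lemma atom_subgraph_label_const W F (lab : V -> V) :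
  agg_atom r (subgraph_agg W F) ->
  (forall e, e \in F -> {in r e &, forall p q, lab p = lab q}) ->
  {in W &, forall p q, lab p = lab q}.
Proof.
move=> atom_WF lab_const p q hp hq; apply/eqP; apply: contraT => lab_pq.
have hWF := atom_is_subgraph atom_WF.
pose A := [set v | lab v == lab p]; pose B := [set e | r e \subset A].
have in_A : is_subgraph (W :&: A) (F :&: B).
  by move=> e; rewrite !inE subsetI => /andP[/hWF -> ->].
have off_A : is_subgraph (W :\: A) (F :\: B).
  move=> e; rewrite !inE => /andP[/subsetPn[w hw w_notA] he].
  apply/subsetP => v hv; rewrite !inE (subsetP (hWF e he) v hv) andbT.
  by rewrite (lab_const e he v w hv hw); move: w_notA; rewrite inE.
case: (atom_subgraph_split atom_WF in_A off_A) => [[/setP/(_ p)]|[/setP/(_ q)]].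
  by rewrite !inE hp eqxx.
by rewrite !inE hq eq_sym lab_pq.
Qed.

(** * Graphs with pairwise disjoint edges *)

Definition edges_disjoint : Prop :=
  forall e1 e2 v, v \in r e1 -> v \in r e2 -> e1 = e2.

Lemma atom_edgeless W : agg_atom r (subgraph_agg W set0) -> exists v, W = [set v].
Proof.
move=> atom_W; have [W0|[v hv]] := set_0Vmem W.
  by case: atom_W => _; rewrite W0 subgraph_agg0.
exists v; have := atom_subgraph_split (A := [set v]) (B := set0) atom_W.
rewrite set0I set0D => /(_ (is_subgraph0 _) (is_subgraph0 _)) [[/setP/(_ v)]|[WvD _]].
  by rewrite !inE hv eqxx.
by apply/eqP; rewrite eqEsubset -setD_eq0 WvD eqxx sub1set hv.
Qed.

Lemma disjoint_atom_through_edge W F e : edges_disjoint ->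
  agg_atom r (subgraph_agg W F) -> e \in F -> W = r e /\ F = [set e].
Proof.
move=> disj atom_WF he; have hWF := atom_is_subgraph atom_WF.
have in_e : is_subgraph (W :&: r e) (F :&: [set e]).
  by move=> f; rewrite !inE => /andP[_ /eqP ->]; rewrite subsetI subxx hWF.
have off_e : is_subgraph (W :\: r e) (F :\: [set e]).
  move=> f; rewrite !inE => /andP[fe hf]; apply/subsetP => v hv.
  rewrite !inE (subsetP (hWF f hf) v hv) andbT; apply/negP => hve.
  by move: fe; rewrite (disj _ _ _ hv hve) eqxx.
have [[_ /setP/(_ e)]|[WeD FeD]] := atom_subgraph_split atom_WF in_e off_e.
  by rewrite !inE he eqxx.
by split; apply/eqP; rewrite eqEsubset -setD_eq0 ?WeD ?FeD eqxx ?sub1set ?hWF.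
Qed.

Lemma disjoint_atom_cases x : edges_disjoint -> agg_atom r x ->
  (exists e, x = edge_agg e) \/ (exists v, x = vertex_agg v).
Proof.
move=> disj atom_x; have [W [F def_x]] := atom_subgraph_agg atom_x.
rewrite def_x {x def_x} in atom_x *; have [F0|[e he]] := set_0Vmem F.
  rewrite F0 in atom_x *; have [v ->] := atom_edgeless atom_x.
  by right; exists v.
have [-> ->] := disjoint_atom_through_edge disj atom_x he.
by left; exists e.
Qed.

Section DisjointEdges.
Hypothesis disj : edges_disjoint.

Lemma disjoint_atom_edge y e : agg_atom r y -> y (inr e) = (y == edge_agg e).
Proof.
case/(disjoint_atom_cases disj) => [[f ->]|[v ->]]; rewrite ffunE /= inE.
  by rewrite (inj_eq edge_agg_inj) eq_sym.
by rewrite (negbTE (vertex_agg_neq_edge_agg _ _)).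
Qed.

Lemma disjoint_atom_vertex y v : agg_atom r y ->
  y (inl v) = (y == vertex_agg v) + \sum_(f | v \in r f) (y == edge_agg f).
Proof.
case/(disjoint_atom_cases disj) => [[e ->]|[w ->]]; rewrite ffunE /=.
  under eq_bigr do rewrite (inj_eq edge_agg_inj).
  by rewrite sum_cond_eqb eq_sym (negbTE (vertex_agg_neq_edge_agg _ _)).
rewrite big1 => [|f _]; last by rewrite (negbTE (vertex_agg_neq_edge_agg _ _)).
by rewrite (inj_eq vertex_agg_inj) inE eq_sym addn0.
Qed.

Lemma disjoint_factorization_edge a s e :
  agg_factorization r a s -> a (inr e) = count_mem (edge_agg e) s.
Proof.
case=> atoms_s <-; rewrite agg_sumE -sum_seq_eqb.
by apply: eq_big_seq => y /atoms_s; apply: disjoint_atom_edge.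
Qed.

Lemma disjoint_factorization_vertex a s v : agg_factorization r a s ->
  a (inl v) = count_mem (vertex_agg v) s + \sum_(f | v \in r f) a (inr f).
Proof.
move=> fact_s; have [atoms_s def_a] := fact_s.
rewrite -{1}def_a agg_sumE (eq_big_seq _ (fun y hy => disjoint_atom_vertex v (atoms_s y hy))).
rewrite big_split /= sum_seq_eqb exchange_big /=; congr (_ + _).
by apply: eq_bigr => f _; rewrite sum_seq_eqb (disjoint_factorization_edge _ fact_s).
Qed.

Lemma disjoint_factorization_unique a s t :
  agg_factorization r a s -> agg_factorization r a t -> perm_eq s t.
Proof.
move=> fact_s fact_t; apply/allP => x hx; apply/eqP.
have atom_x : agg_atom r x by move: hx; rewrite mem_cat => /orP[/fact_s.1|/fact_t.1].
case: (disjoint_atom_cases disj atom_x) => [[e ->]|[v ->]].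
  by rewrite -(disjoint_factorization_edge _ fact_s) -(disjoint_factorization_edge _ fact_t).
apply: (@addIn (\sum_(f | v \in r f) a (inr f))).
by rewrite -(disjoint_factorization_vertex _ fact_s) -(disjoint_factorization_vertex _ fact_t).
Qed.

Lemma disjoint_edges_factorial : agg_factorial r.
Proof.
move=> a ha; split; first exact: factorization_exists.
exact: disjoint_factorization_unique.
Qed.

End DisjointEdges.

(** * Cycles *)

Section Cycle.
Variables (k : nat) (vs : 'I_k -> V) (es : 'I_k -> E).
Hypotheses (k_gt1 : 1 < k) (vs_inj : injective vs) (es_inj : injective es)
  (r_es : forall i, r (es i) = [set vs i; vs (ordS i)]).

Definition cycle_agg : agg :=
  subgraph_agg [set vs i | i : 'I_k] [set es i | i : 'I_k].

Lemma cycle_agg_atom : agg_atom r cycle_agg.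
Proof.
pose i0 : 'I_k := Ordinal (ltnW k_gt1); set Fc := [set es i | i : 'I_k].
have to_edge i : incident Fc (inl (vs i)) (inr (es i)).
  by rewrite /= imset_f // r_es !inE eqxx.
have from_edge i : incident Fc (inr (es i)) (inl (vs (ordS i))).
  by rewrite /= imset_f // r_es !inE eqxx orbT.
have reach i : connect (incident Fc) (inl (vs i0)) (inl (vs i)).
  case: i => n; elim: n => [|n IHn] ltnk.
    by rewrite (_ : Ordinal ltnk = i0) ?connect0 //; apply: val_inj.
  have -> : Ordinal ltnk = ordS (Ordinal (ltnW ltnk)) by apply: val_inj; rewrite /= modn_small.
  exact: connect_trans (IHn _) (connect_trans (connect1 (to_edge _)) (connect1 (from_edge _))).
apply: (@connected_subgraph_atom _ _ (inl (vs i0))); rewrite /= ?imset_f //.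
  by move=> _ /imsetP[i _ ->]; rewrite r_es; apply/subsetP => v /set2P[] ->; apply: imset_f.
move=> [v|f] /= /imsetP[i _ ->]; first exact: reach.
exact: connect_trans (reach i) (connect1 (to_edge i)).
Qed.

Lemma cycle_relation :
  agg_sum [seq edge_agg (es i) | i : 'I_k] =
  agg_add cycle_agg (agg_sum [seq vertex_agg (vs i) | i : 'I_k]).
Proof.
apply/ffunP => -[v|f]; rewrite !ffunE !agg_sumE !big_map /=.
  rewrite -(sum_inj_eqb v vs_inj).
  transitivity (\sum_i ((vs i == v) + (vs (ordS i) == v))).
    apply: eq_bigr => i _; rewrite ffunE /= r_es !inE ![v == _]eq_sym.
    have neq : vs (ordS i) != vs i by rewrite (inj_eq vs_inj) ordS_neq.
    case: (vs i =P v) => [<-|_] /=; last by case: (_ == v).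
    by rewrite (negbTE neq).
  rewrite big_split /=.
  rewrite -(reindex_inj (@ordS_inj k) (P := xpredT) (F := fun i => (vs i == v : nat))).
  by congr (_ + _); apply: eq_bigr => i _; rewrite ffunE /= inE eq_sym.
rewrite [X in _ + X]big1 ?addn0 => [|i _]; last by rewrite ffunE /= inE.
by rewrite -(sum_inj_eqb f es_inj); apply: eq_bigr => i _; rewrite ffunE /= inE eq_sym.
Qed.

End Cycle.

Lemma cycle_not_half_factorial : has_cycle r -> ~ agg_half_factorial r.
Proof.
case=> k [vs [es [k_gt1 vs_inj es_inj r_es]]] hf.
set t := [seq edge_agg (es i) | i : 'I_k].
set s := cycle_agg vs es :: [seq vertex_agg (vs i) | i : 'I_k].
have fact_t : agg_factorization r (agg_sum t) t.
  by split=> // _ /mapP[i _ ->]; apply: edge_agg_atom.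
have fact_s : agg_factorization r (agg_sum t) s.
  split; last by rewrite (cycle_relation k_gt1 vs_inj es_inj r_es).
  move=> _ /predU1P[-> | /mapP[i _ ->]]; [exact: cycle_agg_atom | exact: vertex_agg_atom].
have ha : is_agg r (agg_sum t).
  by apply: is_agg_sum => _ /mapP[i _ ->]; case: (edge_agg_atom (es i)).
by have := hf _ _ _ ha fact_s fact_t; rewrite /= !size_map; lia.
Qed.

(** * Acyclic graphs *)

Section Graph.
Hypothesis graph_r : is_graph r.

Lemma edge_ends e : exists u w, u != w /\ r e = [set u; w].
Proof. by apply/cards2P; rewrite graph_r. Qed.

Lemma edge_endsE e p q : p \in r e -> q \in r e -> p != q -> r e = [set p; q].
Proof.
move=> hp hq pq; apply/eqP; rewrite eq_sym eqEcard cards2 pq graph_r andbT.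
by apply/subsetP => z /set2P[] ->.
Qed.

(* Merge the labels of the two ends of each edge in turn; each merge loses at most one label. *)
Lemma edge_constant_labelling (W : {set V}) (s : seq E) : exists lab : V -> V,
  {in s, forall e, {in r e &, forall p q, lab p = lab q}} /\
  #|W| <= size s + #|lab @: W|.
Proof.
elim: s => [|e s [lab [lab_const card_lab]]]; first by exists id; rewrite card_imset.
have [u [w [_ re]]] := edge_ends e.
pose lab' p := if lab p == lab w then lab u else lab p.
have lab'_e p : p \in r e -> lab' p = lab u.
  by rewrite re /lab' => /set2P[] ->; rewrite ?eqxx //; case: eqP.
exists lab'; split.
  move=> f /predU1P[-> p q /lab'_e -> /lab'_e -> //|hf p q hp hq].
  by rewrite /lab' (lab_const f hf p q hp hq).
have : (lab @: W) :\ lab w \subset lab' @: W.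
  apply/subsetP => l /setD1P[lw /imsetP[p hp def_l]]; rewrite {l}def_l in lw *.
  by apply/imsetP; exists p; rewrite // /lab' (negbTE lw).
move/subset_leq_card; rewrite /= (cardsD1 (lab w) (lab @: W)) in card_lab.
case: (lab w \in _) card_lab => /=; lia.
Qed.

Lemma atom_card_le W F : agg_atom r (subgraph_agg W F) -> #|W| <= #|F| + 1.
Proof.
move=> atom_WF; have [lab [lab_const card_lab]] := edge_constant_labelling W (enum F).
rewrite -cardE in card_lab; apply: leq_trans card_lab _; rewrite leq_add2l.
apply/card_le1_eqP => _ _ /imsetP[p hp ->] /imsetP[q hq ->].
apply: (atom_subgraph_label_const atom_WF) hq hp => e he.
by apply: lab_const; rewrite mem_enum.
Qed.

Lemma atom_subgraph_neq0 W F : agg_atom r (subgraph_agg W F) -> W != set0.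
Proof.
move=> atom_WF; apply/negP => /eqP W0.
have F0 : F = set0.
  apply/setP => e; rewrite inE; apply/negbTE/negP => /(atom_is_subgraph atom_WF).
  by rewrite W0 subset0 => /eqP re0; have := graph_r e; rewrite re0 cards0.
by case: atom_WF => _; rewrite W0 F0 subgraph_agg0.
Qed.

Lemma edges_inside_or_outside (F : {set E}) (C : {set V}) :
  (forall f, f \in F -> {in r f &, forall p q, (p \in C) = (q \in C)}) ->
  F \subset [set f in F | r f \subset C] :|: [set f in F | r f \subset ~: C].
Proof.
move=> C_edge; apply/subsetP => f hf; have [p [q [_ rf]]] := edge_ends f.
have hp : p \in r f by rewrite rf !inE eqxx.
rewrite in_setU !in_set hf /=; apply/orP; case pC: (p \in C); [left|right];
  by apply/subsetP => v hv; rewrite ?in_setC (C_edge f hf v p hv hp) pC.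
Qed.

Definition adj_in (F : {set E}) : rel V :=
  fun p q => [exists f in F, (p \in r f) && (q \in r f)].

Lemma uniq_path_cycle (F : {set E}) e u p :
  path (adj_in F) u p -> uniq (u :: p) -> 0 < size p ->
  e \notin F -> r e = [set last u p; u] -> has_cycle r.
Proof.
move=> hp hu p_gt0 eF re; set m := size p; pose a i := nth u (u :: p) i.
have a_inj i j : i <= m -> j <= m -> a i = a j -> i = j.
  by move=> hi hj /eqP; rewrite nth_uniq // => /eqP.
pose ef i := if i < m then odflt e [pick f in F | (a i \in r f) && (a i.+1 \in r f)] else e.
have ef_lt i : i < m -> ef i \in F /\ r (ef i) = [set a i; a i.+1].
  move=> im; rewrite /ef im; case: pickP => [f /and3P[hf h1 h2]|none].
    split=> //; apply: edge_endsE => //; apply/negP => /eqP/a_inj; lia.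
  by have /existsP[f hf] := pathP u hp i im; move: (none f); rewrite hf.
have ef_m : ef m = e by rewrite /ef ltnn.
have a_m : a m = last u p := nth_last u (u :: p).
exists m.+1, (fun i : 'I_m.+1 => a i), (fun i : 'I_m.+1 => ef i); split=> //.
- by move=> i j /a_inj ij; apply/val_inj/ij; rewrite -ltnS.
- move=> i j ef_ij; apply/val_inj => /=; have := ltn_ord i; have := ltn_ord j.
  rewrite ltnS leq_eqVlt => /predU1P[jm|jm]; rewrite ltnS leq_eqVlt => /predU1P[im|im].
  + by rewrite im jm.
  + by have [] := ef_lt _ im; rewrite ef_ij jm ef_m (negbTE eF).
  + by have [] := ef_lt _ jm; rewrite -ef_ij im ef_m (negbTE eF).
  apply: (@uniq_nth_set2_inj _ u (u :: p)) => //.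
  by rewrite -(ef_lt _ im).2 -(ef_lt _ jm).2 ef_ij.
- move=> i; have := ltn_ord i; rewrite ltnS leq_eqVlt => /predU1P[im|im].
    by rewrite /= im modnn ef_m re a_m setUC.
  by rewrite /= modn_small // (ef_lt _ im).2.
Qed.

Lemma connect_adj_in_cycle (F : {set E}) e u w : r e = [set u; w] -> u != w -> e \notin F ->
  connect (adj_in F) u w -> has_cycle r.
Proof.
move=> re uw eF /connectP[p0 hp0 def_w]; rewrite {w}def_w in re uw.
move: re uw; case: (shortenP hp0) => p hp hu _ re up.
apply: (uniq_path_cycle hp hu _ eF); last by rewrite re setUC.
by case: p {hp hu re} up => //=; rewrite eqxx.
Qed.

Lemma acyclic_card_edges_lt W F : acyclic r -> is_subgraph W F -> W != set0 ->
  #|F| < #|W|.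
Proof.
move=> acyc; have [n] := ubnP #|F|; elim: n W F => // n IHn W F ltFn hWF W_neq0.
have [->|[e he]] := set_0Vmem F; first by rewrite cards0 card_gt0.
have [u [w [uw re]]] := edge_ends e.
have [uW wW] : u \in W /\ w \in W by rewrite !(subsetP (hWF e he)) // re !inE eqxx ?orbT.
set F' := F :\ e; set C := [set v | connect (adj_in F') u v].
have wC : w \notin C.
  rewrite inE; apply/negP => /(connect_adj_in_cycle re uw) cyc.
  by apply/acyc/cyc; rewrite !inE eqxx.
have C_edge f : f \in F' -> {in r f &, forall p q, (p \in C) = (q \in C)}.
  move=> hf p q hp hq; rewrite !inE; apply/idP/idP => /connect_trans; apply;
  by apply: connect1; apply/existsP; exists f; rewrite hf hp hq.
pose FC := [set f in F' | r f \subset C]; pose FnC := [set f in F' | r f \subset ~: C].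
have F'_split : F' \subset FC :|: FnC := edges_inside_or_outside C_edge.
have card_F : #|F| = #|F'|.+1 by rewrite (cardsD1 e F) he.
have in_F' f (A : {set V}) :
    f \in [set f in F' | r f \subset A] -> f \in F' /\ r f \subset W :&: A.
  by rewrite in_set => /andP[hf fA]; rewrite subsetI fA hWF //; case/setD1P: hf.
have lt_n (A : {set V}) : #|[set f in F' | r f \subset A]| < n.
  apply: leq_ltn_trans (subset_leq_card (_ : _ \subset F')) _; last by rewrite -ltnS -card_F.
  by apply/subsetP => f /in_F'[].
have FC_lt : #|FC| < #|W :&: C|.
  apply: IHn (lt_n _) _ _; first by move=> f /in_F'[].
  by apply/set0Pn; exists u; rewrite !inE uW connect0.
have FnC_lt : #|FnC| < #|W :\: C|.
  apply: IHn (lt_n _) _ _; first by move=> f /in_F'[_]; rewrite setDE.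
  by apply/set0Pn; exists w; rewrite inE wC.
have := subset_leq_card F'_split; have := (leq_card_setU FC FnC).1; have := cardsID C W.
lia.
Qed.

Definition vsum (x : agg) := \sum_v x (inl v).

Definition esum (x : agg) := \sum_e x (inr e).

Lemma vsum_subgraph_agg W F : vsum (subgraph_agg W F) = #|W|.
Proof. by rewrite -sum1_card big_mkcond; apply: eq_bigr => v _; rewrite ffunE. Qed.

Lemma esum_subgraph_agg W F : esum (subgraph_agg W F) = #|F|.
Proof. by rewrite -sum1_card big_mkcond; apply: eq_bigr => e _; rewrite ffunE. Qed.

Lemma vsum_agg_sum s : vsum (agg_sum s) = \sum_(y <- s) vsum y.
Proof. by rewrite /vsum exchange_big; apply: eq_bigr => v _; rewrite agg_sumE. Qed.

Lemma esum_agg_sum s : esum (agg_sum s) = \sum_(y <- s) esum y.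
Proof. by rewrite /esum exchange_big; apply: eq_bigr => e _; rewrite agg_sumE. Qed.

Lemma acyclic_atom_vsum x : acyclic r -> agg_atom r x -> vsum x = esum x + 1.
Proof.
move=> acyc atom_x; have [W [F def_x]] := atom_subgraph_agg atom_x.
rewrite def_x {x def_x} in atom_x *; rewrite vsum_subgraph_agg esum_subgraph_agg.
have := atom_card_le atom_x.
have := acyclic_card_edges_lt acyc (atom_is_subgraph atom_x) (atom_subgraph_neq0 atom_x).
lia.
Qed.

Lemma acyclic_factorization_vsum a s : acyclic r -> agg_factorization r a s ->
  vsum a = esum a + size s.
Proof.
move=> acyc [atoms_s <-]; rewrite vsum_agg_sum esum_agg_sum -sum1_size -big_split /=.
by apply: eq_big_seq => y /atoms_s/(acyclic_atom_vsum acyc).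
Qed.

Lemma acyclic_half_factorial : acyclic r -> agg_half_factorial r.
Proof.
move=> acyc a s t _ fact_s fact_t.
by apply/(@addnI (esum a)); rewrite -!acyclic_factorization_vsum.
Qed.

(** * Factorial monoids *)

Lemma parallel_edges_cycle f1 f2 p q : f1 != f2 -> p != q ->
  r f1 = [set p; q] -> r f2 = [set p; q] -> has_cycle r.
Proof.
move=> f12 pq r1 r2; exists 2, (fun i : 'I_2 => if i == ord0 then p else q),
  (fun i : 'I_2 => if i == ord0 then f1 else f2); split=> //.
- by move=> [[|[|//]] ?] [[|[|//]] ?] //= eq_pq; apply: val_inj => //=;
    move: pq; rewrite eq_pq eqxx.
- by move=> [[|[|//]] ?] [[|[|//]] ?] //= eq_f; apply: val_inj => //=;
    move: f12; rewrite eq_f eqxx.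
- by move=> [[|[|//]] ?] /=; rewrite ?r1 // r2 setUC.
Qed.

Lemma acyclic_edges_meet f1 f2 v : acyclic r -> f1 != f2 ->
  v \in r f1 -> v \in r f2 -> r f1 :&: r f2 = [set v].
Proof.
move=> acyc f12 v1 v2; apply/setP => p; rewrite !inE.
have [-> |pv] := eqVneq p v; first by rewrite v1 v2.
apply/negbTE/andP => -[p1 p2]; apply: acyc.
have vp : v != p by rewrite eq_sym.
by apply: (parallel_edges_cycle f12 vp); apply: edge_endsE.
Qed.

Lemma connect_edges_meet e1 e2 u1 u2 : e1 != e2 -> u1 \in r e1 -> u2 \in r e2 ->
  connect (adj r) u1 u2 -> exists f1 f2 v, [/\ f1 != f2, v \in r f1 & v \in r f2].
Proof.
move=> e12 h1 h2 /connectP[p hp def_u2]; rewrite {u2}def_u2 in h2.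
elim: p u1 e1 e12 h1 hp h2 => [|q p IHp] u1 e1 e12 h1 /=; first by exists e1, e2, u1.
case/andP=> /andP[/existsP[f /eqP rf] _] hp h2.
have [fe1|fe1] := eqVneq f e1.
  by apply: IHp e12 _ hp h2; rewrite -fe1 rf !inE eqxx orbT.
by exists e1, f, u1; rewrite eq_sym fe1 h1 rf !inE eqxx.
Qed.

Lemma two_edge_atom f1 f2 v : v \in r f1 -> v \in r f2 ->
  agg_atom r (subgraph_agg (r f1 :|: r f2) [set f1; f2]).
Proof.
move=> v1 v2; set F := [set f1; f2].
have to_f1 : incident F (inl v) (inr f1) by rewrite /= !inE eqxx v1.
have to_f2 : incident F (inl v) (inr f2) by rewrite /= !inE eqxx orbT v2.
apply: (@connected_subgraph_atom _ _ (inl v)); rewrite /= ?inE ?v1 //.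
  by move=> f /set2P[] ->; rewrite ?subsetUl ?subsetUr.
move=> [w|f] /=; rewrite !inE => /orP[hw|hw].
- by apply: connect_trans (connect1 to_f1) (connect1 _); rewrite /= !inE eqxx hw.
- by apply: connect_trans (connect1 to_f2) (connect1 _); rewrite /= !inE eqxx orbT hw.
- by rewrite (eqP hw); apply: connect1.
- by rewrite (eqP hw); apply: connect1.
Qed.

Lemma two_edge_relation f1 f2 v : f1 != f2 -> r f1 :&: r f2 = [set v] ->
  agg_add (edge_agg f1) (edge_agg f2) =
  agg_add (subgraph_agg (r f1 :|: r f2) [set f1; f2]) (vertex_agg v).
Proof.
move=> f12 /setP meet; apply/ffunP => -[p|g]; rewrite !ffunE /= !inE.
  by have := meet p; rewrite !inE => <-; case: (p \in r f1); case: (p \in r f2).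
by case: (g =P f1) => [->|_]; rewrite ?(negbTE f12) ?addn0.
Qed.

Lemma factorial_half_factorial : agg_factorial r -> agg_half_factorial r.
Proof.
move=> fact a s t ha fact_s fact_t.
by have [_ uniq_a] := fact a ha; apply/perm_size/uniq_a.
Qed.

Lemma factorial_components_at_most_one_edge :
  agg_factorial r -> components_at_most_one_edge r.
Proof.
move=> fact; have acyc : acyclic r.
  by move=> cyc; apply: cycle_not_half_factorial cyc (factorial_half_factorial fact).
move=> e1 e2 u1 u2 h1 h2 conn; apply/eqP; apply: contraT => e12.
have [f1 [f2 [v [f12 v1 v2]]]] := connect_edges_meet e12 h1 h2 conn.
set a := agg_add (edge_agg f1) (edge_agg f2).
have fact_edges : agg_factorization r a [:: edge_agg f1; edge_agg f2].
  by split; [move=> x; rewrite !inE => /orP[]/eqP ->; apply: edge_agg_atom | rewrite agg_sum2].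
have fact_meet : agg_factorization r a
    [:: subgraph_agg (r f1 :|: r f2) [set f1; f2]; vertex_agg v].
  have meet := acyclic_edges_meet acyc f12 v1 v2.
  split; last by rewrite agg_sum2 /a (two_edge_relation f12 meet).
  move=> x; rewrite !inE => /orP[]/eqP ->; first exact: two_edge_atom v1 v2.
  exact: vertex_agg_atom.
have ha : is_agg r a by case: fact_edges => atoms <-; apply: is_agg_sum => x /atoms[].
have [_ uniq_a] := fact a ha.
have := perm_mem (uniq_a _ _ fact_edges fact_meet) (edge_agg f1).
rewrite !inE eqxx /= => /esym/orP[/eqP/subgraph_agg_inj[_ /setP/(_ f2)]|].
  by rewrite !inE eqxx orbT eq_sym (negbTE f12).
by rewrite eq_sym (negbTE (vertex_agg_neq_edge_agg _ _)).
Qed.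

End Graph.

End Agglomerations.

Theorem theorem4p20 (V E : finType) (r : E -> {set V}) :
  is_graph r ->
  (agg_half_factorial r <-> acyclic r) /\
  (agg_factorial r <-> components_at_most_one_edge r).
Proof.
move=> graph_r; split; split.
- by move=> hf cyc; apply: cycle_not_half_factorial cyc hf.
- exact: acyclic_half_factorial.
- exact: factorial_components_at_most_one_edge.
- move=> one_edge; apply: disjoint_edges_factorial => e1 e2 v h1 h2.
  exact: one_edge h1 h2 (connect0 _ _).
Qed.
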